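(* Let $0<m<L$, $\kappa=L/m$, $\delta\in(0,1)$, $\alpha>0$, and $\rho_\mathrm{GD}(\delta)=\max(1-\alpha m(1-\delta),\ \alpha L(1+\delta)-1)$. Define \[ F(t,\lambda) = -\alpha^2(L-m)^2+2mL\alpha^2\lambda(1-\delta^2) +2\alpha\lambda(m+L)(t-1) + \lambda(2-\delta^2\lambda)(t-1)^2 \] and \[ \rho_\star=\inf\{\rho\ge\rho_\mathrm{GD}(\delta):\ F(\rho,\lambda)\ge0 \text{ and } F(-\rho,\lambda)\ge0 \text{ for some }\lambda\in[0,2/\delta^2]\}. \] Then $\rho_\star=\rho_\mathrm{GD}(\delta)$ if and only if one of the following holds: (1) $\delta<2/(\kappa+1)$ and $\alpha\le \alpha_-:=\frac{1}{1-\delta}\left(\frac{2}{L+m}-\frac{\delta}{m}\right)$; (2) $\delta\in[0,1)$ and $\alpha\ge\alpha_+:=\frac{1}{1+\delta}\left(\frac{2}{L+m}+\frac{\delta}{L}\right)$. *)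

From HB Require Import structures.
From mathcomp Require Import all_boot all_order all_algebra.
From mathcomp Require Import boolp classical_sets reals.
Set Implicit Arguments. Unset Strict Implicit. Unset Printing Implicit Defensive.
Import Order.TTheory GRing.Theory Num.Theory.
Local Open Scope ring_scope.
Local Open Scope classical_set_scope.

Definition rhoGD {R : realType} (m L alpha delta : R) : R :=
  Num.max (1 - alpha * m * (1 - delta)) (alpha * L * (1 + delta) - 1).

Definition Fq {R : realType} (m L alpha delta t lam : R) : R :=
  - alpha ^+ 2 * (L - m) ^+ 2
  + 2 * m * L * alpha ^+ 2 * lam * (1 - delta ^+ 2)
  + 2 * alpha * lam * (m + L) * (t - 1)
  + lam * (2 - delta ^+ 2 * lam) * (t - 1) ^+ 2.

Definition feasible_rates {R : realType} (m L alpha delta : R) : set R :=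
  [set rho | rhoGD m L alpha delta <= rho /\
     exists lam : R, 0 <= lam /\ lam <= 2 / delta ^+ 2 /\
       0 <= Fq m L alpha delta rho lam /\ 0 <= Fq m L alpha delta (- rho) lam].

Definition rho_star {R : realType} (m L alpha delta : R) : R :=
  inf (feasible_rates m L alpha delta).

From HB Require Import structures.
From mathcomp Require Import all_boot all_order all_algebra.
From mathcomp Require Import boolp classical_sets reals.
From mathcomp Require Import ring lra.
Import Order.TTheory GRing.Theory Num.Theory.
Set Implicit Arguments.
Unset Strict Implicit.
Unset Printing Implicit Defensive.
Local Open Scope ring_scope.

(* At each corner of rho_GD the multiplier polynomial is a negative perfect
   square in lambda: F(rho_m, .) with rho_m = 1 - alpha m (1 - delta), and
   F(-rho_L, .) with rho_L = alpha L (1 + delta) - 1, vanish only at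
   lam_m = (L - m) / (delta m (1 - delta)), resp. lam_L = (L - m) / (delta L (1 + delta)).
   So at the active corner the only admissible multiplier is lam_m (resp. lam_L),
   and rho_GD is feasible iff F(-rho_m, lam_m) >= 0 (resp. F(rho_L, lam_L) >= 0);
   these values factor as positive multiples of alpha_- - alpha, resp.
   alpha - alpha_+.  Since F is Lipschitz in both variables on bounded sets and
   the multipliers range over the bounded interval [0, 2/delta^2], rates feasible
   arbitrarily close to rho_GD force multipliers close to lam_m (resp. lam_L), so
   the infimum equals rho_GD exactly when rho_GD itself is feasible.  The condition
   at the inactive corner adds nothing because of the identity
   m (1 - delta) (alpha_- - alpha) = L (1 + delta) (alpha - alpha_+) + rho_m - rho_L,
   and alpha <= alpha_- already forces delta < 2 / (kappa + 1) since alpha > 0. *)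

Lemma quadratic_lipschitz (R : numDomainType) (a b c x y D : R) :
  `|x| <= D -> `|y| <= D ->
  `|(a + b * x + c * x ^+ 2) - (a + b * y + c * y ^+ 2)|
    <= `|x - y| * (`|b| + `|c| * (D + D)).
Proof.
move=> xD yD.
have -> : a + b * x + c * x ^+ 2 - (a + b * y + c * y ^+ 2)
          = (x - y) * (b + c * (x + y)) by ring.
rewrite normrM ler_wpM2l //; apply: (le_trans (ler_normD _ _)).
rewrite lerD2l normrM ler_wpM2l //.
exact: le_trans (ler_normD _ _) (lerD xD yD).
Qed.

Lemma ge0_of_peak_approx (R : realFieldType) (D : R -> Prop) (g : R -> R)
    (x0 c K : R) :
  0 < c -> (forall x, D x -> g x <= g x0 + `|x - x0| * K) ->
  (forall e, 0 < e -> exists x, [/\ D x, c * (x - x0) ^+ 2 <= e & - e <= g x]) ->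
  0 <= g x0.
Proof.
move=> c0 gK approx; rewrite leNgt; apply/negP => gx0.
have K0 := normr_ge0 K.
set r := - g x0 / (3 * (`|K| + 1)).
have r0 : 0 < r by apply: divr_gt0; lra.
have rK : r * `|K| <= - g x0 / 3.
  have -> : - g x0 / 3 = r * (`|K| + 1) by rewrite /r; field; lra.
  by rewrite ler_wpM2l ?ltW //; lra.
have e0 : 0 < Num.min (- g x0 / 3) (c * r ^+ 2).
  by rewrite lt_min; apply/andP; split; [lra | apply/mulr_gt0/exprn_gt0].
have [x [Dx]] := approx _ e0; rewrite lerNl !le_min => /andP[_ xr] /andP[gx _].
have xx0 : `|x - x0| <= r.
  have : (x - x0) ^+ 2 <= r ^+ 2 by rewrite -(ler_pM2l c0).
  by rewrite ler_norml => h; apply/andP; split; nra.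
have : `|x - x0| * K <= r * `|K|.
  by apply: le_trans (ler_norm _) _; rewrite normrM normr_id ler_wpM2r.
have := gK x Dx; lra.
Qed.

Lemma sqr_mul_le_of_le_div (R : realFieldType) (d c x : R) :
  0 <= c -> x <= c / d ^+ 2 -> d ^+ 2 * x <= c.
Proof.
move=> c_ge0 xc; have [->|d_neq0] := eqVneq d 0; first by rewrite expr0n mul0r.
have d2_gt0 : 0 < d ^+ 2 by rewrite lt_def sqrf_eq0 d_neq0 sqr_ge0.
by rewrite mulrC -ler_pdivlMr.
Qed.

Lemma Fq_lipschitz_t (R : realType) (m L a d t0 : R) :
  exists K, forall t lam : R, 0 <= lam <= 2 / d ^+ 2 -> `|t - t0| <= 1 ->
    `|Fq m L a d t lam - Fq m L a d t0 lam| <= `|t - t0| * K.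
Proof.
set Lam := 2 / d ^+ 2; set D := `|t0 - 1| + 1.
exists (`|2 * a * (m + L)| * Lam + 2 * Lam * (D + D)) => t lam hlam tt0.
have /andP[lam0 lamL] := hlam.
have dlam : d ^+ 2 * lam <= 2 by apply: sqr_mul_le_of_le_div.
have tD : `|t - 1| <= D.
  have -> : t - 1 = (t - t0) + (t0 - 1) by ring.
  by apply: le_trans (ler_normD _ _) _; rewrite /D addrC lerD2l.
have t0D : `|t0 - 1| <= D by rewrite lerDl.
have := quadratic_lipschitz (- a ^+ 2 * (L - m) ^+ 2 + 2 * m * L * a ^+ 2 * lam * (1 - d ^+ 2))
  (2 * a * lam * (m + L)) (lam * (2 - d ^+ 2 * lam)) tD t0D.
have -> : t - 1 - (t0 - 1) = t - t0 by ring.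
move/le_trans; apply; rewrite ler_wpM2l //; apply: lerD.
  have -> : 2 * a * lam * (m + L) = 2 * a * (m + L) * lam by ring.
  by rewrite normrM (ger0_norm lam0) ler_wpM2l.
apply: ler_wpM2r; first by rewrite addr_ge0 // (le_trans _ t0D).
have dlam2 := mulr_ge0 (mulr_ge0 (sqr_ge0 d) lam0) lam0.
by rewrite ger0_norm ?mulr_ge0 ?subr_ge0 //; lra.
Qed.

Lemma Fq_lipschitz_lam (R : realType) (m L a d t lam0 Lam : R) :
  exists K, forall lam : R, 0 <= lam <= Lam ->
    Fq m L a d t lam <= Fq m L a d t lam0 + `|lam - lam0| * K.
Proof.
set A := - a ^+ 2 * (L - m) ^+ 2.
set B := 2 * m * L * a ^+ 2 * (1 - d ^+ 2) + 2 * a * (m + L) * (t - 1) + 2 * (t - 1) ^+ 2.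
set C := - (d ^+ 2 * (t - 1) ^+ 2).
have FqE : forall lam, Fq m L a d t lam = A + B * lam + C * lam ^+ 2.
  by move=> lam; rewrite /Fq /A /B /C; ring.
set D := Lam + `|lam0|.
exists (`|B| + `|C| * (D + D)) => lam /andP[lam_ge0 lam_le].
rewrite -lerBlDl !FqE; apply: le_trans (ler_norm _) _.
apply: quadratic_lipschitz; rewrite /D.
  by rewrite ger0_norm // (le_trans lam_le) // lerDl.
by rewrite lerDr (le_trans lam_ge0).
Qed.

Local Open Scope classical_set_scope.

Lemma inf_eq_min (R : realType) (S : set R) (x : R) :
  S x -> lbound S x -> inf S = x.
Proof.
move=> Sx lbx; apply/le_anti/andP; split; first by apply: ge_inf Sx; exists x.
by apply: lb_le_inf lbx; exists x.
Qed.

Lemma normr_and_oppr (R : realDomainType) (P : R -> Prop) (t : R) :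
  P `|t| /\ P (- `|t|) <-> P t /\ P (- t).
Proof.
have [t_ge0|t_lt0] := lerP 0 t; first by rewrite ger0_norm.
by rewrite ltr0_norm // opprK; split=> -[].
Qed.

Lemma rhoGD_approx_feasible (R : realType) (m L a d : R) :
  0 < rhoGD m L a d -> rho_star m L a d = rhoGD m L a d ->
  forall e, 0 < e -> exists lam, [/\ 0 <= lam <= 2 / d ^+ 2,
    - e <= Fq m L a d (rhoGD m L a d) lam &
    - e <= Fq m L a d (- rhoGD m L a d) lam].
Proof.
set r0 := rhoGD m L a d => r0_gt0 inf_r0 e e0.
have [K1 lip1] := Fq_lipschitz_t m L a d r0.
have [K2 lip2] := Fq_lipschitz_t m L a d (- r0).
have S0 : feasible_rates m L a d !=set0.
  (* inf set0 = 0, hence the hypothesis 0 < rhoGD *)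
  apply/set0P; apply: contraTneq r0_gt0 => S0.
  by rewrite -inf_r0 /rho_star S0 inf0 ltxx.
have K0 : 0 <= `|K1| + `|K2| by rewrite addr_ge0.
set s := Num.min 1 (e / (`|K1| + `|K2| + 1)).
have s0 : 0 < s by rewrite lt_min ltr01 divr_gt0 //; lra.
have sK : s * (`|K1| + `|K2|) <= e.
  have : s <= e / (`|K1| + `|K2| + 1) by rewrite ge_min lexx orbT.
  rewrite ler_pdivlMr; lra.
have : rho_star m L a d < r0 + s by rewrite inf_r0 ltrDl.
case/(inf_lt S0) => r [r_ge [lam [lam_ge0 [lam_le [Fr Fnr]]]]] r_lt.
rewrite -/r0 in r_ge; have lam_bd : 0 <= lam <= 2 / d ^+ 2 by rewrite lam_ge0.
have rr0 : `|r - r0| <= s by rewrite ger0_norm; lra.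
have rr1 : `|r - r0| <= 1 by apply: le_trans rr0 _; rewrite ge_min lexx.
have rK (K : R) : `|K| <= `|K1| + `|K2| -> `|r - r0| * K <= e.
  move=> KK; apply: le_trans (ler_norm _) _; rewrite normrM normr_id.
  by apply: le_trans sK; apply: ler_pM.
exists lam; split=> //.
  have := lip1 r lam lam_bd rr1.
  have := rK K1 (ler_wpDr (normr_ge0 _) (lexx _)).
  rewrite ler_norml; lra.
have := lip2 (- r) lam lam_bd.
rewrite -opprD normrN => /(_ rr1).
have := rK K2 (ler_wpDl (normr_ge0 _) (lexx _)).
rewrite ler_norml; lra.
Qed.

Lemma rho_star_eq_rhoGD_peak (R : realType) (m L a d t0 lam0 c : R) :
  `|t0| = rhoGD m L a d -> 0 < rhoGD m L a d -> 0 < c ->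
  (forall lam, Fq m L a d t0 lam = - c * (lam - lam0) ^+ 2) ->
  0 <= lam0 -> (0 <= Fq m L a d (- t0) lam0 -> lam0 <= 2 / d ^+ 2) ->
  rho_star m L a d = rhoGD m L a d <-> 0 <= Fq m L a d (- t0) lam0.
Proof.
move=> t0E r0_gt0 c0 Fq_peak lam0_ge0 lam0_le; split=> [inf_r0|Fnt0].
  have [K lip] := Fq_lipschitz_lam m L a d (- t0) lam0 (2 / d ^+ 2).
  apply: (ge0_of_peak_approx c0 lip) => e e0.
  have [lam [lam_bd Fr Fnr]] := rhoGD_approx_feasible r0_gt0 inf_r0 e0.
  rewrite -t0E in Fr Fnr.
  have [] := (normr_and_oppr (fun s => - e <= Fq m L a d s lam) t0).1 (conj Fr Fnr).
  by rewrite Fq_peak mulNr lerN2; exists lam.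
apply: inf_eq_min; last by move=> x [].
split=> //; exists lam0; do 2!split=> //; first exact: lam0_le.
rewrite -t0E; apply/(normr_and_oppr (fun s => 0 <= Fq m L a d s lam0)).
by rewrite Fq_peak subrr expr0n mulr0.
Qed.

Section Corners.
Variables (R : realType) (m L a d : R).
Hypotheses (m_gt0 : 0 < m) (m_lt_L : m < L) (d_gt0 : 0 < d) (d_lt1 : d < 1)
  (a_gt0 : 0 < a).

Let L_gt0 : 0 < L. Proof. exact: lt_trans m_lt_L. Qed.
Let m_neq0 : m != 0. Proof. exact: lt0r_neq0. Qed.
Let L_neq0 : L != 0. Proof. exact: lt0r_neq0. Qed.
Let d_neq0 : d != 0. Proof. exact: lt0r_neq0. Qed.
Let subd_neq0 : 1 - d != 0. Proof. by rewrite subr_eq0 gt_eqF. Qed.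
Let addd_neq0 : 1 + d != 0. Proof. by rewrite lt0r_neq0 ?addr_gt0. Qed.
Let addLm_neq0 : L + m != 0. Proof. by rewrite lt0r_neq0 ?addr_gt0. Qed.
Let nonzero := (m_neq0, L_neq0, d_neq0, subd_neq0, addd_neq0, addLm_neq0).

Local Notation rho_m := (1 - a * m * (1 - d)).
Local Notation rho_L := (a * L * (1 + d) - 1).
Local Notation lam_m := ((L - m) / (d * m * (1 - d))).
Local Notation lam_L := ((L - m) / (d * L * (1 + d))).
Local Notation alpha_minus := ((1 - d)^-1 * (2 / (L + m) - d / m)).
Local Notation alpha_plus := ((1 + d)^-1 * (2 / (L + m) + d / L)).

Lemma Fq_rho_m lam :
  Fq m L a d rho_m lam = - (d * a * m * (1 - d)) ^+ 2 * (lam - lam_m) ^+ 2.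
Proof. by rewrite /Fq; field; rewrite ?nonzero. Qed.

Lemma Fq_opp_rho_m :
  Fq m L a d (- rho_m) lam_m =
  (alpha_minus - a) * (4 * rho_m * (L ^+ 2 - m ^+ 2) / (d * m * (1 - d))).
Proof. by rewrite /Fq; field; rewrite ?nonzero. Qed.

Lemma Fq_opp_rho_L lam :
  Fq m L a d (- rho_L) lam = - (d * a * L * (1 + d)) ^+ 2 * (lam - lam_L) ^+ 2.
Proof. by rewrite /Fq; field; rewrite ?nonzero. Qed.

Lemma Fq_rho_L :
  Fq m L a d rho_L lam_L =
  (a - alpha_plus) * (4 * rho_L * (L ^+ 2 - m ^+ 2) / (d * L * (1 + d))).
Proof. by rewrite /Fq; field; rewrite ?nonzero. Qed.

Lemma alpha_gap :
  m * (1 - d) * (alpha_minus - a) = L * (1 + d) * (a - alpha_plus) + (rho_m - rho_L).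
Proof. by field; rewrite ?nonzero. Qed.

Lemma rho_m_add_rho_L_gt0 : 0 < rho_m + rho_L.
Proof.
have : 0 < a * (L - m) + a * d * (L + m) by rewrite addr_gt0 ?mulr_gt0 ?subr_gt0 ?addr_gt0.
lra.
Qed.

Lemma alpha_minus_gt0 : 0 < alpha_minus -> d * (L + m) < 2 * m.
Proof.
have -> : alpha_minus = (2 * m - d * (L + m)) / ((1 - d) * (L + m) * m).
  by field; rewrite ?nonzero.
by rewrite pmulr_lgt0 ?subr_gt0 // invr_gt0 !mulr_gt0 ?subr_gt0 ?addr_gt0.
Qed.

Lemma rho_star_eq_rhoGD_m :
  rho_L <= rho_m -> rho_star m L a d = rhoGD m L a d <-> a <= alpha_minus.
Proof.
move=> le_Lm; have rho_m_gt0 : 0 < rho_m by have := rho_m_add_rho_L_gt0; lra.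
have rhoE : rhoGD m L a d = rho_m by rewrite /rhoGD max_l.
have sqr_gt0 : 0 < L ^+ 2 - m ^+ 2 by rewrite subr_gt0 ltr_pXn2r ?nnegrE ?ltW.
have num_gt0 : 0 < 4 * rho_m * (L ^+ 2 - m ^+ 2) by rewrite mulr_gt0 // mulr_gt0.
have den_gt0 : 0 < d * m * (1 - d) by rewrite !mulr_gt0 ?subr_gt0.
have FA : (0 <= Fq m L a d (- rho_m) lam_m) = (a <= alpha_minus).
  by rewrite Fq_opp_rho_m pmulr_lge0 ?divr_gt0 // subr_ge0.
rewrite -FA; apply: (rho_star_eq_rhoGD_peak (c := (d * a * m * (1 - d)) ^+ 2)).
- by rewrite rhoE ger0_norm ?ltW.
- by rewrite rhoE.
- by rewrite exprn_gt0 // !mulr_gt0 ?subr_gt0.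
- exact: Fq_rho_m.
- by rewrite ltW // divr_gt0 // subr_gt0.
rewrite FA => /(lt_le_trans a_gt0)/alpha_minus_gt0 hd.
have -> : 2 / d ^+ 2 = lam_m + (2 * m - d * (L + m)) / (d ^+ 2 * m * (1 - d)).
  by field; rewrite ?nonzero.
by rewrite lerDl ltW // divr_gt0 ?subr_gt0 // !mulr_gt0 ?exprn_gt0 ?subr_gt0.
Qed.

Lemma rho_star_eq_rhoGD_L :
  rho_m <= rho_L -> rho_star m L a d = rhoGD m L a d <-> alpha_plus <= a.
Proof.
move=> le_mL; have rho_L_gt0 : 0 < rho_L by have := rho_m_add_rho_L_gt0; lra.
have rhoE : rhoGD m L a d = rho_L by rewrite /rhoGD max_r.
have sqr_gt0 : 0 < L ^+ 2 - m ^+ 2 by rewrite subr_gt0 ltr_pXn2r ?nnegrE ?ltW.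
have num_gt0 : 0 < 4 * rho_L * (L ^+ 2 - m ^+ 2) by rewrite mulr_gt0 // mulr_gt0.
have den_gt0 : 0 < d * L * (1 + d) by rewrite !mulr_gt0 ?addr_gt0.
have FB : (0 <= Fq m L a d rho_L lam_L) = (alpha_plus <= a).
  by rewrite Fq_rho_L pmulr_lge0 ?divr_gt0 // subr_ge0.
rewrite -FB -(opprK rho_L).
apply: (rho_star_eq_rhoGD_peak (c := (d * a * L * (1 + d)) ^+ 2)).
- by rewrite rhoE normrN ger0_norm ?ltW.
- by rewrite rhoE.
- by rewrite exprn_gt0 // !mulr_gt0 ?addr_gt0.
- exact: Fq_opp_rho_L.
- by rewrite ltW // divr_gt0 // subr_gt0.
move=> _; have -> : 2 / d ^+ 2 = lam_L + (2 * L + d * (L + m)) / (d ^+ 2 * L * (1 + d)).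
  by field; rewrite ?nonzero.
by rewrite lerDl ltW // divr_gt0 ?addr_gt0 ?mulr_gt0 ?exprn_gt0 ?addr_gt0.
Qed.

Lemma rho_star_eq_rhoGD_iff :
  rho_star m L a d = rhoGD m L a d <-> a <= alpha_minus \/ alpha_plus <= a.
Proof.
have gap := alpha_gap.
have pos_m : 0 < m * (1 - d) by rewrite mulr_gt0 ?subr_gt0.
have pos_L : 0 < L * (1 + d) by rewrite mulr_gt0 ?addr_gt0.
have [le_Lm|lt_mL] := lerP rho_L rho_m.
  rewrite rho_star_eq_rhoGD_m //; split=> [|[] //]; first by left.
  move=> le_pa; rewrite -subr_ge0 -(pmulr_rge0 _ pos_m) gap.
  by rewrite addr_ge0 ?subr_ge0 // mulr_ge0 ?subr_ge0 // ltW.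
rewrite rho_star_eq_rhoGD_L ?(ltW lt_mL) //; split=> [|[] //]; first by right.
move=> le_am; rewrite -subr_ge0 -(pmulr_rge0 _ pos_L).
have -> : L * (1 + d) * (a - alpha_plus) = m * (1 - d) * (alpha_minus - a) + (rho_L - rho_m).
  by rewrite gap; ring.
by rewrite addr_ge0 ?subr_ge0 ?(ltW lt_mL) // mulr_ge0 ?subr_ge0 // ltW.
Qed.

End Corners.

Theorem lemma3p2 (R : realType) (m L delta alpha : R)
  (hm : 0 < m) (hmL : m < L) (hd0 : 0 < delta) (hd1 : delta < 1) (ha : 0 < alpha) :
  let kappa := L / m in
  let alpha_minus := (1 - delta)^-1 * (2 / (L + m) - delta / m) in
  let alpha_plus := (1 + delta)^-1 * (2 / (L + m) + delta / L) in
  rho_star m L alpha delta = rhoGD m L alpha delta <->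
  ((delta < 2 / (kappa + 1) /\ alpha <= alpha_minus) \/
   ((0 <= delta /\ delta < 1) /\ alpha_plus <= alpha)).
Proof.
move=> kappa alpha_minus alpha_plus.
have L_gt0 : 0 < L := lt_trans hm hmL.
have kappaE : 2 / (kappa + 1) = 2 * m / (L + m).
  by rewrite /kappa; field; rewrite !lt0r_neq0 ?addr_gt0.
rewrite rho_star_eq_rhoGD_iff // kappaE.
split=> [[le_am|le_pa]|[[_ le_am]|[_ le_pa]]]; [left|right|left|right] => //.
  split=> //; rewrite ltr_pdivlMr ?addr_gt0 //.
  by apply: alpha_minus_gt0 => //; apply: lt_le_trans le_am.
by split=> //; split=> //; apply: ltW.
Qed.
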